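(* Let $(a,b,c)\in\mathbb{R}^3\setminus\{(0,0,0)\}$, $A_1=(a,b,c)$, $A_2=(-ae^{c},-be^{-c},-c)$, and let $N(x,y,z)=e^{z}(x+ae^{c})(x-a)+e^{-z}(y+be^{-c})(y-b)+4\sinh\frac{z+c}{2}\sinh\frac{z-c}{2}$, so that the translation-like Thaloid of $\overline{A_1A_2}$ together with $A_1,A_2$ is the zero set $\{N=0\}$. Then for no $R>0$ does $\{N=0\}$ coincide with the translation sphere $S^t_O(R)=\Big\{(x,y,z):\big(\tfrac{xz}{1-e^{-z}}\big)^2+\big(\tfrac{yz}{e^{z}-1}\big)^2+z^2=R^2\Big\}$ (where $\tfrac{z}{1-e^{-z}}$ and $\tfrac{z}{e^z-1}$ are interpreted as $1$ at $z=0$) centered at the origin; in particular the Thaloid is never the translation sphere of radius equal to the translation distance from the origin to $A_1$.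
   Context: $\mathbf{Sol}$ is $\mathbb{R}^3$ with coordinates $(x,y,z)$, group law $(a,b,c)(x,y,z)=(x+ae^{-z},\,y+be^{z},\,z+c)$, and left-invariant metric $ds^2=e^{2z}dx^2+e^{-2z}dy^2+dz^2$. The translation curve starting at the origin with initial unit vector $(u,v,w)$ is $t\mapsto\big(-\tfrac{u}{w}(e^{-wt}-1),\tfrac{v}{w}(e^{wt}-1),wt\big)$ if $w\neq0$ and $t\mapsto(ut,vt,0)$ if $w=0$; the translation distance from the origin to a point is the parameter length $t$ of this curve reaching it, and $S^t_O(R)$ is the set of points at translation distance $R$ from the origin. For $P=(p_1,p_2,p_3)$ let $T_P(X,Y,Z)=(p_1+Xe^{-p_3},\,p_2+Ye^{p_3},\,p_3+Z)$; the translation curve from $P$ to $Q$ is the $T_P$-image of the translation curve from the origin to $T_P^{-1}(Q)$. The translation-like Thaloid of $\overline{A_1A_2}$ is the set of points $P\notin\{A_1,A_2\}$ at which the initial tangent vectors of the translation curves from $P$ to $A_1$ and to $A_2$ are orthogonal with respect to the metric at $P$. *)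

From Stdlib Require Import Reals.
Open Scope R_scope.

Definition thaloidN (a b c x y z : R) : R :=
  exp z * (x + a * exp c) * (x - a) + exp (- z) * (y + b * exp (- c)) * (y - b)
  + 4 * sinh ((z + c) / 2) * sinh ((z - c) / 2).

Definition fsol1 (z : R) : R := if Req_EM_T z 0 then 1 else z / (1 - exp (- z)).
Definition fsol2 (z : R) : R := if Req_EM_T z 0 then 1 else z / (exp z - 1).

Definition in_tsphere (Rad x y z : R) : Prop :=
  (x * fsol1 z) ^ 2 + (y * fsol2 z) ^ 2 + z ^ 2 = Rad ^ 2.

(* translation curve from the origin with initial unit vector (u,v,w) *)
Definition tcurve (u v w t : R) : R * R * R :=
  if Req_EM_T w 0 then (u * t, v * t, 0)
  else (- (u / w) * (exp (- (w * t)) - 1), (v / w) * (exp (w * t) - 1), w * t).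

Definition is_tdist (P : R * R * R) (t : R) : Prop :=
  0 <= t /\ exists u v w, u ^ 2 + v ^ 2 + w ^ 2 = 1 /\ tcurve u v w t = P.

From Stdlib Require Import Reals Lra Psatz.
From Coquelicot Require Import Coquelicot.
Open Scope R_scope.

(* A sphere centred at the origin is invariant under x -> -x and y -> -y, so with
   A1 = (a,b,c) it would also contain (-a,b,c) and (a,-b,c); on the Thaloid this forces
   a = 0 or c = 0, and b = 0 or c = 0.  If c <> 0 then a = b = 0, A1 = (0,0,c) and the
   sphere has radius |c|, hence contains (c,0,0); but N(c,0,0) = c^2 - 4 sinh(c/2)^2 < 0.
   If c = 0 the sphere contains (0,0,R) and (0,0,-R), and adding the two values of N there
   (using a^2 + b^2 = R^2) gives (2 - R^2) cosh R = 2, impossible since the left side is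
   below 2 for R > 0.  A sphere of radius 0 is the origin, which the Thaloid is not
   unless A1 = O. *)

Lemma pos_of_pos_derive (f f' : R -> R) :
  (forall x, is_derive f x (f' x)) -> f 0 = 0 ->
  (forall x, 0 < x -> 0 < f' x) -> forall x, 0 < x -> 0 < f x.
Proof.
intros Hd H0 Hp x Hx.
destruct (MVT_cor2 f f' 0 x Hx) as [c [Hc1 Hc2]].
- intros c _. apply is_derive_Reals, Hd.
- rewrite H0 in Hc1. assert (0 < f' c) by (apply Hp; lra). nra.
Qed.

Lemma sinh_opp (x : R) : sinh (- x) = - sinh x.
Proof. unfold sinh; rewrite Ropp_involutive; field. Qed.

Lemma sinh_gt0 (x : R) : 0 < x -> 0 < sinh x.
Proof. intros Hx. rewrite <- sinh_0. now apply sinh_lt. Qed.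

Lemma cosh_gt0 (x : R) : 0 < cosh x.
Proof. unfold cosh. pose proof (exp_pos x). pose proof (exp_pos (- x)). lra. Qed.

Lemma sinh_half_sqr (x : R) : 4 * sinh (x / 2) * sinh (x / 2) = 2 * cosh x - 2.
Proof.
unfold sinh, cosh.
assert (E1 : exp (x / 2) * exp (x / 2) = exp x)
  by (rewrite <- exp_plus; f_equal; field).
assert (E2 : exp (- (x / 2)) * exp (- (x / 2)) = exp (- x))
  by (rewrite <- exp_plus; f_equal; field).
assert (E3 : exp (x / 2) * exp (- (x / 2)) = 1)
  by (rewrite <- exp_plus, <- exp_0; f_equal; ring).
nra.
Qed.

Lemma cosh_gt1 (x : R) : 0 < x -> 1 < cosh x.
Proof.
intros Hx. pose proof (sinh_half_sqr x). pose proof (sinh_gt0 (x / 2)). nra.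
Qed.

Lemma sinh_gt_id (x : R) : 0 < x -> x < sinh x.
Proof.
intros Hx.
enough (0 < sinh x - x) by lra.
apply (pos_of_pos_derive (fun t => sinh t - t) (fun t => cosh t - 1)); auto.
- intros t. unfold sinh, cosh. auto_derive; auto. field.
- rewrite sinh_0. ring.
- intros t Ht. pose proof (cosh_gt1 t Ht). lra.
Qed.

Lemma sqr_lt_sinh_sqr (x : R) : x <> 0 -> x * x < sinh x * sinh x.
Proof.
intros Hx. destruct (Rlt_or_le 0 x) as [Hp | Hn].
- pose proof (sinh_gt_id x Hp). nra.
- pose proof (sinh_gt_id (- x) ltac:(lra)). rewrite sinh_opp in H. nra.
Qed.

Lemma two_sub_sqr_mul_cosh_lt (r : R) : 0 < r -> (2 - r * r) * cosh r < 2.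
Proof.
intros Hr.
enough (0 < 2 - (2 - r * r) * cosh r) by lra.
apply (pos_of_pos_derive (fun t => 2 - (2 - t * t) * cosh t)
         (fun t => 2 * t * cosh t - (2 - t * t) * sinh t)); auto.
- intros t. unfold sinh, cosh. auto_derive; auto. field.
- rewrite cosh_0. ring.
- apply (pos_of_pos_derive _ (fun t => t * t * cosh t + 4 * t * sinh t)).
  + intros t. unfold sinh, cosh. auto_derive; auto. field.
  + rewrite sinh_0. ring.
  + intros t Ht. pose proof (sinh_gt0 t Ht). pose proof (cosh_gt0 t). nra.
Qed.

Lemma fsol1_0 : fsol1 0 = 1.
Proof. unfold fsol1; destruct (Req_EM_T 0 0); [reflexivity | congruence]. Qed.

Lemma fsol2_0 : fsol2 0 = 1.
Proof. unfold fsol2; destruct (Req_EM_T 0 0); [reflexivity | congruence]. Qed.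

Lemma in_tsphere_oppx (Rad x y z : R) : in_tsphere Rad x y z -> in_tsphere Rad (- x) y z.
Proof. unfold in_tsphere. intros H. rewrite <- H. ring. Qed.

Lemma in_tsphere_oppy (Rad x y z : R) : in_tsphere Rad x y z -> in_tsphere Rad x (- y) z.
Proof. unfold in_tsphere. intros H. rewrite <- H. ring. Qed.

Lemma in_tsphere_z0 (Rad x y : R) : in_tsphere Rad x y 0 <-> x * x + y * y = Rad * Rad.
Proof. unfold in_tsphere. rewrite fsol1_0, fsol2_0. split; intros H; nra. Qed.

Lemma in_tsphere_axis (Rad z : R) : in_tsphere Rad 0 0 z <-> z * z = Rad * Rad.
Proof. unfold in_tsphere. split; intros H; nra. Qed.

Lemma in_tsphere_radius0 (x y z : R) : in_tsphere 0 x y z -> x = 0 /\ y = 0 /\ z = 0.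
Proof.
intros H.
assert (Hz : z = 0) by (unfold in_tsphere in H; nra).
subst z. apply in_tsphere_z0 in H. repeat split; nra.
Qed.

Lemma thaloidN_A1 (a b c : R) : thaloidN a b c a b c = 0.
Proof. unfold thaloidN. replace ((c - c) / 2) with 0 by field. rewrite sinh_0. ring. Qed.

Lemma thaloidN_A1_oppx (a b c : R) :
  thaloidN a b c (- a) b c = - 2 * (a * a) * exp c * (exp c - 1).
Proof. unfold thaloidN. replace ((c - c) / 2) with 0 by field. rewrite sinh_0. ring. Qed.

Lemma thaloidN_A1_oppy (a b c : R) :
  thaloidN a b c a (- b) c = - 2 * (b * b) * exp (- c) * (exp (- c) - 1).
Proof. unfold thaloidN. replace ((c - c) / 2) with 0 by field. rewrite sinh_0. ring. Qed.

Lemma thaloidN_axis_c (c : R) :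
  thaloidN 0 0 c c 0 0 = c * c - 4 * sinh (c / 2) * sinh (c / 2).
Proof.
unfold thaloidN. replace ((0 + c) / 2) with (c / 2) by field.
replace ((0 - c) / 2) with (- (c / 2)) by field. rewrite sinh_opp, Ropp_0, exp_0. ring.
Qed.

Lemma thaloidN_c0_axis_sum (a b z : R) :
  thaloidN a b 0 0 0 z + thaloidN a b 0 0 0 (- z)
  = 2 * ((2 - (a * a + b * b)) * cosh z - 2).
Proof.
unfold thaloidN.
replace ((z + 0) / 2) with (z / 2) by field. replace ((z - 0) / 2) with (z / 2) by field.
replace ((- z + 0) / 2) with ((- z) / 2) by field.
replace ((- z - 0) / 2) with ((- z) / 2) by field.
rewrite 2!sinh_half_sqr, Ropp_involutive, Ropp_0, exp_0.
unfold cosh. rewrite Ropp_involutive. field.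
Qed.

Lemma sqr_mul_exp_sub1_eq0 (a c : R) : (a * a) * exp c * (exp c - 1) = 0 -> a = 0 \/ c = 0.
Proof.
intros H. pose proof (exp_pos c).
destruct (Rmult_integral _ _ H) as [Ha | Hc].
- left. apply Rmult_integral in Ha as [Ha | Ha]; [nra | lra].
- right. apply exp_inv. rewrite exp_0. lra.
Qed.

Definition thaloid_eq_tsphere (a b c Rad : R) : Prop :=
  forall x y z : R, thaloidN a b c x y z = 0 <-> in_tsphere Rad x y z.

Section ThaloidIsSphere.

Variables a b c Rad : R.
Hypothesis Hsph : thaloid_eq_tsphere a b c Rad.

Lemma tsphere_A1 : in_tsphere Rad a b c.
Proof. apply Hsph, thaloidN_A1. Qed.

Lemma a_eq0_or_c_eq0 : a = 0 \/ c = 0.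
Proof.
apply sqr_mul_exp_sub1_eq0.
assert (H : thaloidN a b c (- a) b c = 0) by apply Hsph, in_tsphere_oppx, tsphere_A1.
rewrite thaloidN_A1_oppx in H. lra.
Qed.

Lemma b_eq0_or_c_eq0 : b = 0 \/ c = 0.
Proof.
destruct (sqr_mul_exp_sub1_eq0 b (- c)) as [Hb | Hc]; [| now left | right; lra].
assert (H : thaloidN a b c a (- b) c = 0) by apply Hsph, in_tsphere_oppy, tsphere_A1.
rewrite thaloidN_A1_oppy in H. lra.
Qed.

Lemma thaloid_tsphere_c_eq0 : c = 0.
Proof.
destruct (Req_dec c 0) as [Hc | Hc]; [exact Hc | exfalso].
destruct a_eq0_or_c_eq0 as [Ha | ?]; [| contradiction].
destruct b_eq0_or_c_eq0 as [Hb | ?]; [| contradiction].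
assert (HR : c * c = Rad * Rad).
{ apply in_tsphere_axis. rewrite <- Ha, <- Hb at 1. exact tsphere_A1. }
assert (H : thaloidN a b c c 0 0 = 0) by (apply Hsph, in_tsphere_z0; lra).
rewrite Ha, Hb, thaloidN_axis_c in H.
pose proof (sqr_lt_sinh_sqr (c / 2) ltac:(lra)). nra.
Qed.

Lemma thaloid_tsphere_radius_nonpos : Rad <= 0.
Proof.
destruct (Rle_or_lt Rad 0) as [HR | HR]; [exact HR | exfalso].
assert (HA : a * a + b * b = Rad * Rad).
{ apply in_tsphere_z0. rewrite <- thaloid_tsphere_c_eq0. exact tsphere_A1. }
assert (Hp : thaloidN a b c 0 0 Rad = 0) by (apply Hsph, in_tsphere_axis; ring).
assert (Hm : thaloidN a b c 0 0 (- Rad) = 0) by (apply Hsph, in_tsphere_axis; ring).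
pose proof (thaloidN_c0_axis_sum a b Rad) as Hsum.
rewrite thaloid_tsphere_c_eq0 in Hp, Hm. rewrite Hp, Hm, HA in Hsum.
pose proof (two_sub_sqr_mul_cosh_lt Rad HR). lra.
Qed.

End ThaloidIsSphere.

Theorem lemma4p2 (a b c : R) (habc : ~ (a = 0 /\ b = 0 /\ c = 0)) :
  (forall Rad : R, 0 < Rad ->
     ~ (forall x y z : R, thaloidN a b c x y z = 0 <-> in_tsphere Rad x y z)) /\
  (forall Rad : R, is_tdist (a, b, c) Rad ->
     ~ (forall x y z : R, thaloidN a b c x y z = 0 <-> in_tsphere Rad x y z)).
Proof.
split.
- intros Rad HR Hsph. pose proof (thaloid_tsphere_radius_nonpos a b c Rad Hsph). lra.
- intros Rad [HR _] Hsph.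
  assert (Rad = 0) by (pose proof (thaloid_tsphere_radius_nonpos a b c Rad Hsph); lra).
  subst Rad. apply habc, in_tsphere_radius0, (tsphere_A1 a b c 0 Hsph).
Qed.
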